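(* Let $t,w,w',n,g$ be positive integers. If there exists a Steiner system $\mathrm{S}(t,w',n)$ and a $\mathrm{GMHP}^*(t,w,w',g)$, then there exists a $\mathrm{GMHP}^*(t,w,n,g)$.
   Context: A Steiner system $\mathrm{S}(t,k,n)$ is a pair $(X,\mathcal{B})$ with $|X|=n$ and $\mathcal{B}$ a family of $k$-subsets (blocks) of $X$ such that every $t$-subset of $X$ lies in exactly one block. For a set $Y$ of size $m$, let $X=Y\times[g]$ with groups $\{y\}\times[g]$, $y\in Y$. An H-packing $\mathrm{HP}(m,g,w,t)$ is a family of $w$-subsets (blocks) of $X$, each meeting every group in at most one point, such that every $t$-subset of $X$ with points in $t$ distinct groups lies in at most one block. A block $\{(y_1,a_1),\dots,(y_w,a_w)\}$ is identified with the word indexed by $Y$ over $\{0\}\cup[g]$ with entry $a_s$ at coordinate $y_s$ and $0$ elsewhere. A $\mathrm{GMHP}^*(t,w,m,g)$ is an $\mathrm{HP}(m,g,w,t)$ in which any two distinct blocks have Hamming distance at least $2(w-t+1)$ and which has exactly $g^{t-1}\binom{m}{t}/\binom{w}{t}$ blocks. *)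

From mathcomp Require Import all_boot all_order all_algebra.
Set Implicit Arguments. Unset Strict Implicit. Unset Printing Implicit Defensive.

Definition steiner_system (t k n : nat) (B : {set {set 'I_n}}) : Prop :=
  (forall b, b \in B -> #|b| = k) /\
  (forall T : {set 'I_n}, #|T| = t -> #|[set b in B | T \subset b]| = 1).

(* Words indexed by Y = 'I_m over the alphabet {0} u [g], where [g] = {1..g}
   is encoded by the ordinals 1..g of 'I_(g.+1). *)
Definition word (m g : nat) := {ffun 'I_m -> 'I_g.+1}.

(* Points of X = Y x [g]; the point (y, a) with a : 'I_g stands for (y, a+1).
   Group of a point = its first component. *)
Definition point (m g : nat) := ('I_m * 'I_g)%type.

Definition in_block m g (u : word m g) (p : point m g) : bool :=
  val (u p.1) == (val p.2).+1.

Definition weight m g (u : word m g) : nat := #|[set i | u i != ord0]|.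

Definition hdist m g (u v : word m g) : nat := #|[set i | u i != v i]|.

(* H-packing HP(m,g,w,t): blocks are w-subsets meeting each group in at most
   one point (automatic for words; size w = weight w), and every t-subset with
   points in t distinct groups is contained in at most one block. *)
Definition H_packing (m g w t : nat) (C : {set word m g}) : Prop :=
  (forall u, u \in C -> weight u = w) /\
  (forall S : {set point m g}, #|S| = t ->
     {in S &, forall p q, p.1 = q.1 -> p = q} ->
     #|[set u in C | [forall p in S, in_block u p]]| <= 1).

Definition GMHP_star (t w m g : nat) (C : {set word m g}) : Prop :=
  @H_packing m g w t C /\
  (forall u v, u \in C -> v \in C -> u != v -> 2 * (w - t + 1) <= hdist u v) /\
  (#|C|%:Q = (g ^ (t - 1) * 'C(m, t))%N%:Q / ('C(w, t))%:Q)%R.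

From mathcomp Require Import all_boot all_order all_algebra.
From mathcomp Require Import ring zify.
Set Implicit Arguments. Unset Strict Implicit. Unset Printing Implicit Defensive.

(* Proof idea: place a copy of the code C on every block b of the Steiner
   system, through a bijection [w'] -> b, padding with zeros outside b.  Two
   copies on the same block inherit the packing and distance properties of C.
   Copies on distinct blocks have supports meeting in fewer than t coordinates,
   which both forces Hamming distance at least 2(w - t + 1) and prevents a
   t-set of points from lying in both.  Counting gives
   |B| |C| = C(n,t)/C(w',t) * g^(t-1) C(w',t)/C(w,t). *)

Lemma exists_subset_card (T : finType) (A : {set T}) k :
  k <= #|A| -> exists2 X : {set T}, X \subset A & #|X| = k.
Proof.
move=> le_kA.
have : 0 < #|[set X : {set T} | X \subset A & #|X| == k]| by rewrite cards_draws bin_gt0.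
by case/card_gt0P => X; rewrite inE => /andP[sXA /eqP cardX]; exists X.
Qed.

Section Steiner.
Variables (t k n : nat) (B : {set {set 'I_n}}).
Hypothesis steinerB : @steiner_system t k n B.

Lemma card_steiner_blocks : #|B| * 'C(k, t) = 'C(n, t).
Proof.
have [cardB uniqB] := steinerB.
rewrite -[in RHS](card_ord n) -(card_draws _ t).
transitivity (\sum_(T in [set T : {set 'I_n} | #|T| == t])
                \sum_(b in B) (T \subset b : nat)).
  rewrite exchange_big /= -sum_nat_const; apply: eq_bigr => b bB.
  rewrite -(cardB b bB) -cards_draws -sum1_card big_mkcond [RHS]big_mkcond /=.
  by apply: eq_bigr => T _; rewrite !inE; case: (T \subset b); case: (#|T| == t).
rewrite -sum1_card; apply: eq_bigr => T; rewrite inE => /eqP /uniqB <-.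
rewrite -sum1_card big_mkcond [RHS]big_mkcond /=; apply: eq_bigr => b _.
by rewrite !inE; case: (b \in B); case: (T \subset b).
Qed.

Lemma steiner_block_uniq (T b b' : {set 'I_n}) : #|T| = t ->
  b \in B -> b' \in B -> T \subset b -> T \subset b' -> b = b'.
Proof.
move=> cardT bB b'B Tb Tb'.
have /eqP/cards1P [c defc] := steinerB.2 T cardT.
have : b \in [set c] by rewrite -defc inE bB Tb.
have : b' \in [set c] by rewrite -defc inE b'B Tb'.
by rewrite !inE => /eqP -> /eqP ->.
Qed.

Lemma steiner_cardI_lt (b b' : {set 'I_n}) :
  b \in B -> b' \in B -> b != b' -> #|b :&: b'| < t.
Proof.
move=> bB b'B neq_bb'; rewrite ltnNge; apply/negP => /exists_subset_card[T].
rewrite subsetI => /andP[Tb Tb'] cardT.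
by rewrite (steiner_block_uniq cardT bB b'B Tb Tb') eqxx in neq_bb'.
Qed.

End Steiner.

Definition supp m g (u : word m g) : {set 'I_m} := [set i | u i != ord0].

Definition groups m g (S : {set point m g}) : {set 'I_m} := [set p.1 | p in S].

Lemma supp_in_block m g (u : word m g) (p : point m g) : in_block u p -> p.1 \in supp u.
Proof. by rewrite /in_block inE; apply: contraTneq => ->. Qed.

Lemma groups_sub_supp m g (u : word m g) (S : {set point m g}) :
  [forall p in S, in_block u p] -> groups S \subset supp u.
Proof.
move/forall_inP=> Su; apply/subsetP => _ /imsetP[p pS ->].
exact: supp_in_block (Su p pS).
Qed.

Lemma hdist_ge_of_cardI_supp m g (u v : word m g) (w t : nat) :
  weight u = w -> weight v = w -> t <= w ->
  #|supp u :&: supp v| < t -> 2 * (w - t + 1) <= hdist u v.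
Proof.
rewrite /weight /hdist -!/(supp _) => wu wv le_tw ltI.
set Z : {set 'I_m} := [set i | u i != v i].
have suppDu : supp u :\: supp v \subset Z :&: supp u.
  by apply/subsetP => i; rewrite !inE => /andP[/negPn/eqP-> ->].
have suppDv : supp v :\: supp u \subset Z :\: supp u.
  by apply/subsetP => i; rewrite !inE => /andP[/negPn/eqP-> nz_vi]; rewrite eqxx eq_sym.
move: (subset_leq_card suppDu) (subset_leq_card suppDv) (cardsID (supp u) Z).
rewrite !cardsD wu wv [supp v :&: _]setIC.
(* Equal cardinals occur with differently annotated set types, which lia would
   treat as distinct atoms. *)
move: #|Z| #|Z :&: supp u| #|supp u :&: supp v| ltI => nZ nZu nI; lia.
Qed.

Section Spread.
Variables (k n g : nat) (f : 'I_k -> 'I_n).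
Hypothesis f_inj : injective f.

Definition spread (u : word k g) : word n g :=
  [ffun i => if [pick j | f j == i] is Some j then u j else ord0].

Lemma spread_f (u : word k g) j : spread u (f j) = u j.
Proof.
by rewrite ffunE; case: pickP => [j' /eqP/f_inj -> // | /(_ j)]; rewrite eqxx.
Qed.

Lemma spread_out (u : word k g) i : i \notin codom f -> spread u i = ord0.
Proof.
move=> i_f; rewrite ffunE; case: pickP => // j /eqP fj.
by rewrite -fj codom_f in i_f.
Qed.

Lemma spread_neq (u v : word k g) :
  [set i | spread u i != spread v i] = f @: [set j | u j != v j].
Proof.
apply/setP => i; rewrite inE; have [/codomP[j ->] | i_f] := boolP (i \in codom f).
  by rewrite !spread_f (mem_imset _ _ f_inj) inE.
rewrite !spread_out // eqxx; apply/esym/negbTE/imsetP => -[j _ fj].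
by rewrite fj codom_f in i_f.
Qed.

Lemma supp_spread (u : word k g) : supp (spread u) = f @: supp u.
Proof.
apply/setP => i; rewrite inE; have [/codomP[j ->] | i_f] := boolP (i \in codom f).
  by rewrite spread_f (mem_imset _ _ f_inj) inE.
rewrite spread_out // eqxx; apply/esym/negbTE/imsetP => -[j _ fj].
by rewrite fj codom_f in i_f.
Qed.

Lemma weight_spread (u : word k g) : weight (spread u) = weight u.
Proof. by rewrite /weight -!/(supp _) supp_spread card_imset. Qed.

Lemma hdist_spread (u v : word k g) : hdist (spread u) (spread v) = hdist u v.
Proof. by rewrite /hdist spread_neq card_imset. Qed.

Lemma spread_inj : injective spread.
Proof. by move=> u v eq_uv; apply/ffunP => j; rewrite -!spread_f eq_uv. Qed.

Definition unspread_points (S : {set point n g}) : {set point k g} :=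
  [set q | (f q.1, q.2) \in S].

Section Unspread.
Variable S : {set point n g}.
Hypothesis groupsS : groups S \subset codom f.

Lemma unspread_pointsK : [set (f q.1, q.2) | q in unspread_points S] = S.
Proof.
apply/setP => -[i a]; apply/imsetP/idP => [[q] | iaS]; first by rewrite inE => ? ->.
have /codomP[j fj] : i \in codom f by apply: (subsetP groupsS); exact: imset_f iaS.
by exists (j, a); rewrite ?inE /= -fj.
Qed.

Lemma card_unspread_points : #|unspread_points S| = #|S|.
Proof.
by rewrite -{2}unspread_pointsK card_imset // => -[j a] [j' a'] [/f_inj-> ->].
Qed.

Lemma unspread_points_groups :
  {in S &, forall p q, p.1 = q.1 -> p = q} ->
  {in unspread_points S &, forall p q, p.1 = q.1 -> p = q}.
Proof.
move=> grpS [j a] [j' a']; rewrite !inE /= => + j'a'S eq_jj'; rewrite eq_jj' => jaS.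
by case: (grpS _ _ jaS j'a'S erefl) => ->.
Qed.

Lemma in_block_spread (u : word k g) :
  [forall p in S, in_block (spread u) p] =
  [forall q in unspread_points S, in_block u q].
Proof.
rewrite -{1}unspread_pointsK; apply/forall_inP/forall_inP => Su q qS.
  by have := Su _ (imset_f _ qS); rewrite /in_block spread_f.
by case/imsetP: qS => q' q'S ->; rewrite /in_block spread_f; exact: Su.
Qed.

End Unspread.
End Spread.

Lemma nth_enum_inj n k (x0 : 'I_n) (b : {set 'I_n}) :
  #|b| = k -> injective (fun j : 'I_k => nth x0 (enum b) j).
Proof.
move=> cardb j j' /eqP; rewrite nth_uniq ?enum_uniq // -?cardE ?cardb //.
by move/eqP/val_inj.
Qed.

Lemma codom_nth_enum n k (x0 : 'I_n) (b : {set 'I_n}) :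
  #|b| = k -> codom (fun j : 'I_k => nth x0 (enum b) j) =i b.
Proof.
move=> cardb i; apply/codomP/idP => [[j ->] | ib].
  by rewrite -mem_enum mem_nth // -cardE cardb.
have ltik : index i (enum b) < k by rewrite -cardb cardE index_mem mem_enum.
by exists (Ordinal ltik); rewrite nth_index ?mem_enum.
Qed.

Lemma GMHP_star_set0 t w m g : w < t -> @GMHP_star t w m g set0.
Proof.
move=> lt_wt; split; [split|split].
- by move=> u; rewrite inE.
- move=> S _ _; rewrite (_ : [set u in set0 | _] = set0) ?cards0 //.
  by apply/setP => u; rewrite !inE.
- by move=> u v; rewrite inE.
(* C(w,t) = 0, and division by 0 is 0 in rat *)
- by rewrite cards0 (bin_small lt_wt) GRing.invr0 GRing.mulr0.
Qed.

Section Construction.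
Variables (t w k n g : nat) (B : {set {set 'I_n}}) (C : {set word k g}).
Hypotheses (steinerB : @steiner_system t k n B) (gmhpC : @GMHP_star t w k g C).
Hypothesis le_tw : t <= w.
Variable param : {set 'I_n} -> 'I_k -> 'I_n.
Hypotheses (param_inj : {in B, forall b, injective (param b)})
           (codom_param : {in B, forall b, codom (param b) =i b}).

Definition place (bu : {set 'I_n} * word k g) : word n g := spread (param bu.1) bu.2.

Definition placed_code : {set word n g} := place @: setX B C.

Lemma supp_place b u : b \in B -> supp (place (b, u)) \subset b.
Proof.
move=> bB; rewrite (supp_spread (param_inj bB)); apply/subsetP => _ /imsetP[j _ ->].
by rewrite -(codom_param bB) codom_f.
Qed.

Lemma weight_place b u : b \in B -> u \in C -> weight (place (b, u)) = w.
Proof. by move=> bB uC; rewrite (weight_spread (param_inj bB)); exact: gmhpC.1.1. Qed.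

Lemma hdist_place_blocks b u b' u' : b \in B -> u \in C -> b' \in B -> u' \in C ->
  b != b' -> 2 * (w - t + 1) <= hdist (place (b, u)) (place (b', u')).
Proof.
move=> bB uC b'B u'C neq_bb'; apply: hdist_ge_of_cardI_supp; rewrite ?weight_place //.
apply: leq_ltn_trans (steiner_cardI_lt steinerB bB b'B neq_bb').
by apply/subset_leq_card/setISS; exact: supp_place.
Qed.

Lemma hdist_placed_code :
  {in placed_code &, forall x y, x != y -> 2 * (w - t + 1) <= hdist x y}.
Proof.
move=> _ _ /imsetP[[b u] /setXP[bB uC] ->] /imsetP[[b' u'] /setXP[b'B u'C] ->] neq.
have [eq_bb' | ] := eqVneq b b'; last exact: hdist_place_blocks.
move: neq; rewrite -{}eq_bb' /place /= (hdist_spread (param_inj bB)) => neq.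
by apply: gmhpC.2.1 => //; apply: contraNneq neq => ->.
Qed.

Lemma place_inj : {in setX B C &, injective place}.
Proof.
move=> [b u] [b' u'] /setXP[bB uC] /setXP[b'B u'C] eq_place.
have [eq_bb' | neq_bb'] := eqVneq b b'.
  by move: eq_place; rewrite -eq_bb' => /(spread_inj (param_inj bB)) /= ->.
have := hdist_place_blocks bB uC b'B u'C neq_bb'.
rewrite eq_place /hdist (_ : [set i | _] = set0) ?cards0 ?leqn0 ?muln_eq0 ?addn1 //.
by apply/setP => i; rewrite !inE eqxx.
Qed.

Lemma packing_placed_code : @H_packing n g w t placed_code.
Proof.
split=> [_ /imsetP[[b u] /setXP[bB uC] ->] | S cardS grpS]; first exact: weight_place.
apply/card_le1_eqP => x y; rewrite !inE.
case/andP=> /imsetP[[b u] /setXP[bB uC] ->{x}] Su.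
case/andP=> /imsetP[[b' u'] /setXP[b'B u'C] ->{y}] Su'.
have cardT : #|groups S| = t by rewrite card_in_imset.
have groupsS c v : [forall p in S, in_block (place (c, v)) p] -> c \in B -> groups S \subset c.
  by move=> Sv cB; apply: subset_trans (groups_sub_supp Sv) (supp_place _ cB).
have eq_bb' :=
  steiner_block_uniq steinerB cardT bB b'B (groupsS _ _ Su bB) (groupsS _ _ Su' b'B).
move: Su' b'B u'C; rewrite -{}eq_bb' => Su' _ u'C.
have Sf : groups S \subset codom (param b).
  by apply/subsetP => i /(subsetP (groupsS _ _ Su bB)); rewrite codom_param.
move: Su Su'; rewrite /place /= !(in_block_spread (param_inj bB) Sf) => Su Su'.
have := gmhpC.1.2 _ (etrans (card_unspread_points (param_inj bB) Sf) cardS)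
          (unspread_points_groups (f := param b) grpS).
by move/card_le1_eqP/(_ u u'); rewrite !inE uC u'C Su Su' => /(_ erefl erefl) ->.
Qed.

Lemma card_placed_code :
  (#|placed_code|%:Q = (g ^ (t - 1) * 'C(n, t))%N%:Q / ('C(w, t))%:Q)%R.
Proof.
rewrite card_in_imset; last exact: place_inj.
rewrite cardsX -(card_steiner_blocks steinerB) !PoszM !GRing.rmorphM /=.
by rewrite gmhpC.2.2 !PoszM !GRing.rmorphM /=; ring.
Qed.

Lemma GMHP_star_placed_code : @GMHP_star t w n g placed_code.
Proof.
split; [exact: packing_placed_code | split].
- exact: hdist_placed_code.
- exact: card_placed_code.
Qed.

End Construction.

Theorem lemma3p8 (t w w' n g : nat) :
  0 < t -> 0 < w -> 0 < w' -> 0 < n -> 0 < g ->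
  (exists B : {set {set 'I_n}}, @steiner_system t w' n B) ->
  (exists C : {set word w' g}, @GMHP_star t w w' g C) ->
  exists D : {set word n g}, @GMHP_star t w n g D.
Proof.
move=> _ _ _ n_gt0 _ [B steinerB] [C gmhpC].
have [le_tw | lt_wt] := leqP t w; last by exists set0; exact: GMHP_star_set0.
pose x0 : 'I_n := Ordinal n_gt0.
pose param (b : {set 'I_n}) (j : 'I_w') := nth x0 (enum b) j.
have cardB b : b \in B -> #|b| = w' by exact: steinerB.1.
exists (placed_code B C param).
apply: (GMHP_star_placed_code steinerB gmhpC le_tw (param := param)).
- by move=> b /cardB; exact: nth_enum_inj.
- by move=> b /cardB; exact: codom_nth_enum.
Qed.
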